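(* Let $a_1,\ldots,a_d,b$ be positive integers and $f=\frac1b(a_1,\ldots,a_d)\in\mathbb R^d$. Then the simplex $P=\operatorname{conv}\{e_1,\ldots,e_d,-f\}\subset\mathbb R^d$ is reflexive with respect to the lattice $N'=\mathbb Z^d+\mathbb Z\cdot f$ if and only if $a_1+\cdots+a_d=bc$ for some integer $c$ and each $a_i$ divides $b(c+1)$.
   Context: $e_1,\ldots,e_d$ is the standard basis of $\mathbb R^d$. A lattice polytope $P\subset N'_{\mathbb R}$ is reflexive if $0$ lies in its interior and the dual polytope $P^\circ=\{u\in M'_{\mathbb R}:\langle u,v\rangle\ge-1\ \forall v\in P\}$ has vertices in the dual lattice $M'=\operatorname{Hom}(N',\mathbb Z)$. *)

From HB Require Import structures.
From mathcomp Require Import all_boot all_order all_algebra.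
From mathcomp Require Import all_classical all_reals topology normedtype.
Set Implicit Arguments. Unset Strict Implicit. Unset Printing Implicit Defensive.
Import Order.TTheory GRing.Theory Num.Theory.
Import numFieldNormedType.Exports.
Local Open Scope classical_set_scope.
Local Open Scope ring_scope.

Section Defs.
Variable R : realType.
Variable d : nat.

Definition dotv (u v : 'rV[R]_d) : R := \sum_(i < d) u ord0 i * v ord0 i.

Definition evec (i : 'I_d) : 'rV[R]_d := \row_j (i == j)%:R.

Definition fvec (a : 'I_d -> nat) (b : nat) : 'rV[R]_d :=
  \row_i ((a i)%:R / b%:R).

Definition conv (S : seq 'rV[R]_d) : set 'rV[R]_d :=
  [set x | exists w : 'I_(size S) -> R,
     (forall i, 0 <= w i) /\ \sum_i w i = 1 /\ x = \sum_i w i *: S`_i].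

Definition latticeN' (f : 'rV[R]_d) : set 'rV[R]_d :=
  [set v | exists (z : 'I_d -> int) (k : int),
     v = \row_i (z i)%:~R + k%:~R *: f].

(* dual lattice M' = Hom(N', Z) viewed inside the dual space R^d *)
Definition dual_lattice (L : set 'rV[R]_d) : set 'rV[R]_d :=
  [set u | forall v, L v -> exists z : int, dotv u v = z%:~R].

Definition polar (P : set 'rV[R]_d) : set 'rV[R]_d :=
  [set u | forall v, P v -> -1 <= dotv u v].

Definition vertices (Q : set 'rV[R]_d) : set 'rV[R]_d :=
  [set u | Q u /\ forall x y (t : R), Q x -> Q y -> 0 < t < 1 ->
             u = t *: x + (1 - t) *: y -> x = u /\ y = u].

Definition lattice_polytope (L P : set 'rV[R]_d) : Prop := vertices P `<=` L.

Definition reflexive_polytope (L P : set 'rV[R]_d) : Prop :=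
  [/\ lattice_polytope L P, interior P 0 & vertices (polar P) `<=` dual_lattice L].

Definition simplexP (f : 'rV[R]_d) : set 'rV[R]_d :=
  conv (rcons [seq evec i | i <- enum 'I_d] (- f)).

End Defs.

(* For f > 0 the polar of P = conv{e_1, ..., e_d, -f} is the simplex
   {u | u_i >= -1, <u, f> <= 1}: a vertex u cannot be perturbed inside it,
   which forces all u_i = -1, or <u, f> = 1 with at most one u_j <> -1. So its
   vertices are (-1, ..., -1) and, for each j, the point of the facet
   <u, f> = 1 with u_j = -1 + (1 + \sum_i f_i) / f_j.  Since u lies in the
   dual of N' = Z^d + Z f iff its coordinates and <u, f> are integers, P is
   reflexive iff \sum_i f_i and every (1 + \sum_i f_i) / f_j are integers;
   for f = a / b these say b | \sum_i a_i and a_j | b + \sum_i a_i. *)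

From mathcomp Require Import all_boot all_order all_algebra.
From mathcomp Require Import all_classical all_reals topology normedtype.
From mathcomp Require Import ring lra.
Import Order.TTheory GRing.Theory Num.Theory.
Import numFieldNormedType.Exports.
Set Implicit Arguments. Unset Strict Implicit. Unset Printing Implicit Defensive.
Local Open Scope classical_set_scope.
Local Open Scope ring_scope.

Lemma sum_cast_ord (W : nmodType) m n (e : m = n) (F : 'I_n -> W) :
  \sum_(i < m) F (cast_ord e i) = \sum_i F i.
Proof. by case: n / e F => F; apply: eq_bigr => i _; rewrite cast_ord_id. Qed.

Section ConvexHull.
Variables (R : realType) (d : nat).
Notation V := 'rV[R]_d.

Lemma conv_nth (S : seq V) (i : 'I_(size S)) : conv S S`_i.
Proof.
exists (fun j => (j == i)%:R); split=> [j|]; first by case: (j == i).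
split; first by rewrite (bigD1 i) //= eqxx big1 ?addr0 // => j /negbTE ->.
rewrite (bigD1 i) //= eqxx scale1r big1 ?addr0 // => j /negbTE ->.
exact: scale0r.
Qed.

Lemma conv_mem (S : seq V) x : x \in S -> conv S x.
Proof.
move=> xS; rewrite -(nth_index 0 xS); rewrite -index_mem in xS.
exact: (conv_nth (Ordinal xS)).
Qed.

Lemma conv_rcons n (s : seq V) p x : size s = n ->
  conv (rcons s p) x <-> exists (w : 'I_n -> R) (l : R),
    [/\ forall i, 0 <= w i, 0 <= l, \sum_i w i + l = 1
      & x = \sum_i w i *: s`_i + l *: p].
Proof.
move=> size_s; have e : n.+1 = size (rcons s p) by rewrite size_rcons size_s.
pose low (i : 'I_n) := cast_ord e (widen_ord (leqnSn n) i).
pose top := cast_ord e ord_max.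
have sumE (W : nmodType) (F : 'I_(size (rcons s p)) -> W) :
    \sum_k F k = \sum_i F (low i) + F top.
  by rewrite -(sum_cast_ord e) big_ord_recr.
have nth_low i : (rcons s p)`_(low i) = s`_i by rewrite /= nth_rcons size_s ltn_ord.
have nth_top : (rcons s p)`_top = p by rewrite /= nth_rcons size_s ltnn eqxx.
split=> [[w [w_ge0 [w1 ->]]]|[w [l [w_ge0 l_ge0 w1 ->]]]].
  exists (w \o low), (w top); split=> [i|||]; [exact: w_ge0 | exact: w_ge0 |..].
    by rewrite -w1 sumE.
  by rewrite sumE nth_top; congr (_ + _); apply: eq_bigr => i _; rewrite nth_low.
pose w' (k : 'I_(size (rcons s p))) := oapp w l (insub (val k)).
have w'_low i : w' (low i) = w i by rewrite /w' /= valK.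
have w'_top : w' top = l by rewrite /w' /= insubF ?ltnn.
exists w'; split=> [k|]; first by rewrite /w'; case: insub.
rewrite !sumE w'_top nth_top; split.
  by rewrite -w1; under eq_bigr do rewrite w'_low.
by congr (_ + _); apply: eq_bigr => i _; rewrite w'_low nth_low.
Qed.

Lemma conv_vertex_mem (S : seq V) x : vertices (conv S) x -> x \in S.
Proof.
move=> [[w [w_ge0 [w1 xE]]] extreme].
have [i /andP[_ wi_gt0]] : exists i, true && (0 < w i).
  by apply: psumr_neq0P => //; rewrite w1 => /eqP; rewrite oner_eq0.
have rest : \sum_(j | j != i) w j = 1 - w i by move: w1; rewrite (bigD1 i) //=; lra.
have [wi1|wi_neq1] := eqVneq (w i) 1.
  have rest0 : forall j, j != i -> w j = 0.
    by apply: psumr_eq0P => [j _|]; [exact: w_ge0 | rewrite rest wi1 subrr].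
  rewrite xE (bigD1 i) //= wi1 scale1r big1 ?addr0 ?mem_nth // => j /rest0 ->.
  exact: scale0r.
have rest_gt0 : 0 < 1 - w i.
  by rewrite subr_gt0 lt_neqAle wi_neq1 -w1 (bigD1 i) //= lerDl sumr_ge0.
pose w' j := if j == i then 0 else w j / (1 - w i).
have y_conv : conv S (\sum_j w' j *: S`_j).
  exists w'; split=> [j|].
    by rewrite /w'; case: eqP => // _; rewrite divr_ge0 ?w_ge0 ?ltW.
  split=> //; rewrite (bigD1 i) //= /w' eqxx add0r.
  rewrite (eq_bigr (fun j => w j / (1 - w i))) => [|j /negbTE -> //].
  by rewrite -mulr_suml rest divff ?gt_eqF.
have wi_range : 0 < w i < 1 by rewrite wi_gt0 -subr_gt0.
have x_comb : x = w i *: S`_i + (1 - w i) *: \sum_j w' j *: S`_j.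
  rewrite xE scaler_sumr (bigD1 i) //= [in RHS](bigD1 i) //= /w' eqxx scale0r.
  rewrite scaler0 add0r; congr (_ + _); apply: eq_bigr => j /negbTE ->.
  by rewrite scalerA mulrCA divff ?mulr1 ?gt_eqF.
have [<- _] := extreme _ _ _ (conv_nth i) y_conv wi_range x_comb.
exact: mem_nth.
Qed.

Lemma vertex_perturb (Q : set V) u du :
  vertices Q u -> Q (u + du) -> Q (u - du) -> du = 0.
Proof.
move=> [_ extreme] Qplus Qminus.
have half : 0 < (2^-1 : R) < 1 by apply/andP; split; lra.
have u_mid : u = 2^-1 *: (u + du) + (1 - 2^-1) *: (u - du).
  by apply/rowP => i; rewrite !mxE; lra.
have [uD _] := extreme _ _ _ Qplus Qminus half u_mid.
by apply: (addrI u); rewrite uD addr0.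
Qed.

End ConvexHull.

Section DotProduct.
Variables (R : realType) (d : nat).
Notation V := 'rV[R]_d.
Implicit Types u v w : V.

Lemma dotvDl u v w : dotv (u + v) w = dotv u w + dotv v w.
Proof. by rewrite /dotv -big_split; apply: eq_bigr => i _; rewrite mxE mulrDl. Qed.

Lemma dotvBl u v w : dotv (u - v) w = dotv u w - dotv v w.
Proof. by rewrite /dotv -sumrB; apply: eq_bigr => i _; rewrite !mxE mulrBl. Qed.

Lemma dotvZl k u w : dotv (k *: u) w = k * dotv u w.
Proof. by rewrite /dotv mulr_sumr; apply: eq_bigr => i _; rewrite mxE mulrA. Qed.

Lemma dotvDr u v w : dotv u (v + w) = dotv u v + dotv u w.
Proof. by rewrite /dotv -big_split; apply: eq_bigr => i _; rewrite mxE mulrDr. Qed.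

Lemma dotvZr k u w : dotv u (k *: w) = k * dotv u w.
Proof. by rewrite /dotv mulr_sumr; apply: eq_bigr => i _; rewrite mxE mulrCA. Qed.

Lemma dotvNr u w : dotv u (- w) = - dotv u w.
Proof. by rewrite -scaleN1r dotvZr mulN1r. Qed.

Lemma dotv_row u (W : 'I_d -> R) : dotv u (\row_i W i) = \sum_i u ord0 i * W i.
Proof. by apply: eq_bigr => i _; rewrite mxE. Qed.

Lemma evec_delta (j : 'I_d) : evec R j = delta_mx 0 j.
Proof. by apply/rowP => i; rewrite !mxE eq_sym. Qed.

Lemma dotv_evecr u j : dotv u (evec R j) = u ord0 j.
Proof.
rewrite /dotv (bigD1 j) //= !mxE eqxx mulr1 big1 ?addr0 // => i /negbTE ij.
by rewrite !mxE eq_sym ij mulr0.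
Qed.

Lemma dotv_evecl u j : dotv (evec R j) u = u ord0 j.
Proof.
rewrite /dotv (bigD1 j) //= !mxE eqxx mul1r big1 ?addr0 // => i /negbTE ij.
by rewrite !mxE eq_sym ij mul0r.
Qed.

End DotProduct.

Section Simplex.
Variables (R : realType) (d : nat) (f : 'rV[R]_d).
Notation V := 'rV[R]_d.

Lemma simplexP_char x : simplexP f x <->
  exists (W : 'I_d -> R) (l : R), [/\ forall i, 0 <= W i, 0 <= l,
    \sum_i W i + l = 1 & x = \row_i W i - l *: f].
Proof.
have size_evecs : size [seq evec R i | i <- enum 'I_d] = d.
  by rewrite size_map size_enum_ord.
have sum_evecs (W : 'I_d -> R) :
    \sum_i W i *: [seq evec R i | i <- enum 'I_d]`_i = \row_i W i.
  rewrite [RHS]row_sum_delta; apply: eq_bigr => i _.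
  by rewrite (nth_map i) ?size_enum_ord // nth_ord_enum evec_delta mxE.
apply: iff_trans (conv_rcons _ _ size_evecs) _.
split=> -[W [l [W_ge0 l_ge0 W1 ->]]]; exists W, l;
  by split=> //; rewrite sum_evecs scalerN.
Qed.

Definition polar_simplex : set V :=
  [set u : V | (forall i, -1 <= u ord0 i) /\ dotv u f <= 1].

Lemma polar_simplexE : polar (simplexP f) = polar_simplex.
Proof.
apply/seteqP; split=> u.
  move=> u_polar; split=> [i|].
    rewrite -dotv_evecr; apply: u_polar; apply: conv_mem.
    by rewrite mem_rcons inE map_f ?mem_enum ?orbT.
  rewrite -lerN2 -dotvNr; apply: u_polar; apply: conv_mem.
  by rewrite mem_rcons mem_head.
move=> [u_ge u_f] _ /simplexP_char[W [l [W_ge0 l_ge0 W1 ->]]].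
rewrite dotvDr dotvNr dotvZr dotv_row.
have : \sum_i - W i <= \sum_i u ord0 i * W i.
  by apply: ler_sum => i _; rewrite mulrC -mulrN1 ler_wpM2l.
rewrite sumrN; have : l * dotv u f <= l by rewrite ler_piMr.
lra.
Qed.

Lemma latticeN'_evec j : latticeN' f (evec R j).
Proof.
exists (fun i => (j == i)%:Z), 0; apply/rowP => i.
by rewrite !mxE mulr0z mul0r addr0 -pmulrn.
Qed.

Lemma latticeN'_f : latticeN' f f.
Proof. by exists (fun _ => 0), 1; apply/rowP => i; rewrite !mxE mulr0z add0r mul1r. Qed.

Lemma simplexP_lattice_polytope : lattice_polytope (latticeN' f) (simplexP f).
Proof.
move=> x /conv_vertex_mem; rewrite mem_rcons inE => /orP[/eqP ->|/mapP[j _ ->]].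
  by exists (fun _ => 0), (-1); apply/rowP => i; rewrite !mxE mulr0z add0r mulN1r.
exact: latticeN'_evec.
Qed.

Lemma dual_latticeN'E u : dual_lattice (latticeN' f) u <->
  (forall i, u ord0 i \is a Num.int) /\ dotv u f \is a Num.int.
Proof.
split=> [u_dual | [u_int uf_int] _ [z [k ->]]].
  split=> [i|]; last by have [z ->] := u_dual _ latticeN'_f.
  by have [z] := u_dual _ (latticeN'_evec i); rewrite dotv_evecr => ->.
apply/intrP; rewrite dotvDr dotvZr dotv_row rpredD ?rpredM ?intr_int //.
by rewrite rpred_sum // => i _; rewrite rpredM ?intr_int.
Qed.

End Simplex.

Section PositiveSimplex.
Variables (R : realType) (d : nat) (f : 'rV[R]_d).
Hypothesis f_gt0 : forall i, 0 < f ord0 i.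
Notation V := 'rV[R]_d.
Local Notation fsum := (\sum_i f ord0 i).
Implicit Types u x y du : V.

Lemma fsum_ge0 : 0 <= fsum.
Proof. by apply: sumr_ge0 => i _; exact: ltW. Qed.

Lemma simplexP_box : exists2 e : R, 0 < e &
  forall v : V, (forall i, `|v ord0 i| < e) -> simplexP f v.
Proof.
pose m := \big[Num.min/1]_i f ord0 i.
have m_gt0 : 0 < m by apply: lt_bigmin.
have m_le1 : m <= 1 by exact: bigmin_le_id.
have m_le i : m <= f ord0 i by exact: bigmin_le.
pose K := 1 + fsum; have K_ge1 : 1 <= K by rewrite lerDl fsum_ge0.
have d_ge0 : 0 <= d%:R :> R := ler0n R d.
have denom_gt0 : 0 < 2 * K * (d%:R + 1) by rewrite !mulr_gt0 //; lra.
(* On the box the weight l = (1 - \sum_i v_i) / K of -f stays >= 1/(2K), and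
   m <= f_i, so each weight v_i + l f_i of e_i stays >= -e + m/(2K) >= 0. *)
pose e := m / (2 * K * (d%:R + 1)).
have eK : e * (2 * K * (d%:R + 1)) = m by rewrite divfK ?gt_eqF.
have e_gt0 : 0 < e by rewrite divr_gt0.
exists e => // v v_small; pose l := (1 - \sum_i v ord0 i) / K.
have lK : l * K = 1 - \sum_i v ord0 i by rewrite divfK // gt_eqF //; lra.
have sum_v : \sum_i v ord0 i <= \sum_(i < d) e.
  by apply: ler_sum => i _; exact: le_trans (ler_norm _) (ltW (v_small i)).
rewrite sumr_const card_ord -mulr_natl in sum_v.
have de : d%:R * e * 2 <= 1.
  have deK : 0 <= d%:R * e * (K - 1) by apply: mulr_ge0; [apply: mulr_ge0|]; lra.
  nra.
have l_ge : 1 <= l * K * 2 by lra.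
have l_gt0 : 0 < l by rewrite divr_gt0 //; lra.
have e_le : e <= l * m.
  have lKm : m <= l * K * 2 * m by nra.
  have eKd : 0 <= e * K * d%:R by apply: mulr_ge0; [apply: mulr_ge0|]; lra.
  nra.
apply/simplexP_char; exists (fun i => v ord0 i + l * f ord0 i), l; split.
- move=> i; have := v_small i; rewrite ltr_norml => /andP[v_gt _].
  have : l * m <= l * f ord0 i by rewrite ler_pM2l.
  lra.
- exact: ltW.
- by rewrite big_split /= -mulr_sumr; rewrite /K in lK; lra.
- by apply/rowP => i; rewrite !mxE; ring.
Qed.

Lemma interior_simplexP : interior (simplexP f) 0.
Proof.
have [e e_gt0 box] := simplexP_box.
apply/(@nbhs_ballP R); exists e => //= v [_ v_small]; apply: box => i.
by have := v_small ord0 i; rewrite /ball /= !mxE sub0r normrN.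
Qed.

Definition polar_vertex0 : V := const_mx (-1).

Definition polar_vertex j : V :=
  polar_vertex0 + ((1 + fsum) / f ord0 j) *: evec R j.

Lemma eq_polar_vertex0 u : (forall i, u ord0 i = -1) -> u = polar_vertex0.
Proof. by move=> u_m1; apply/rowP => i; rewrite mxE u_m1. Qed.

Lemma dotv_polar_vertex0 : dotv polar_vertex0 f = - fsum.
Proof. by rewrite /dotv -sumrN; apply: eq_bigr => i _; rewrite mxE mulN1r. Qed.

Lemma polar_vertex_off j i : i != j -> polar_vertex j ord0 i = -1.
Proof. by move=> ij; rewrite !mxE eq_sym (negbTE ij) mulr0 addr0. Qed.

Lemma polar_vertex_diag j : polar_vertex j ord0 j = -1 + (1 + fsum) / f ord0 j.
Proof. by rewrite !mxE eqxx mulr1. Qed.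

Lemma dotv_off_coord u j : (forall i, i != j -> u ord0 i = -1) ->
  dotv u f = (u ord0 j + 1) * f ord0 j - fsum.
Proof.
move=> u_off; rewrite /dotv [in RHS](bigD1 j) //= (bigD1 j) //=.
rewrite (eq_bigr (fun i => - f ord0 i)) => [|i /u_off ->]; last exact: mulN1r.
by rewrite sumrN; ring.
Qed.

Lemma dotv_polar_vertex j : dotv (polar_vertex j) f = 1.
Proof.
rewrite (dotv_off_coord (@polar_vertex_off j)) polar_vertex_diag.
by rewrite addrAC addNr add0r divfK ?gt_eqF // addrK.
Qed.

Lemma eq_polar_vertex u j : (forall i, i != j -> u ord0 i = -1) ->
  dotv u f = 1 -> u = polar_vertex j.
Proof.
move=> u_off uf1; apply/rowP => i.
have [->|ij] := eqVneq i j; last by rewrite polar_vertex_off // u_off.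
move: uf1; rewrite polar_vertex_diag (dotv_off_coord u_off) => uf1.
have -> : 1 + fsum = (u ord0 j + 1) * f ord0 j by lra.
by rewrite mulfK ?gt_eqF //; lra.
Qed.

Lemma polar_simplex_tight u x y t :
  polar_simplex f x -> polar_simplex f y -> 0 < t < 1 ->
  u = t *: x + (1 - t) *: y ->
  (forall i, u ord0 i = -1 -> x ord0 i = -1 /\ y ord0 i = -1) /\
  (dotv u f = 1 -> dotv x f = 1 /\ dotv y f = 1).
Proof.
move=> [x_ge xf] [y_ge yf] /andP[t_gt0 t_lt1] ->; split=> [i|].
  by rewrite !mxE => comb; have := x_ge i; have := y_ge i; split; nra.
by rewrite dotvDl !dotvZl => comb; split; nra.
Qed.

Lemma vertices_polar_vertex0 : vertices (polar_simplex f) polar_vertex0.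
Proof.
split; first by split=> [i|]; rewrite ?mxE // dotv_polar_vertex0; have := fsum_ge0; lra.
move=> x y t x_in y_in t01 comb.
have [tight _] := polar_simplex_tight x_in y_in t01 comb.
have {}tight i : x ord0 i = -1 /\ y ord0 i = -1 by apply: tight; rewrite mxE.
by split; apply: eq_polar_vertex0 => i; have [] := tight i.
Qed.

Lemma vertices_polar_vertex j : vertices (polar_simplex f) (polar_vertex j).
Proof.
split.
  split=> [i|]; last by rewrite dotv_polar_vertex.
  have [->|ij] := eqVneq i j; last by rewrite polar_vertex_off.
  rewrite polar_vertex_diag lerDl divr_ge0 ?addr_ge0 ?fsum_ge0 //.
  exact: ltW.
move=> x y t x_in y_in t01 comb.
have [tight_coord tight_dot] := polar_simplex_tight x_in y_in t01 comb.
have [xf yf] := tight_dot (dotv_polar_vertex j).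
have off i : i != j -> x ord0 i = -1 /\ y ord0 i = -1.
  by move=> ij; apply: tight_coord; exact: polar_vertex_off.
by split; apply: eq_polar_vertex => // i /off[].
Qed.

Lemma vertex_polar_simplex_perturb u du : vertices (polar_simplex f) u ->
  (forall i, `|du ord0 i| <= u ord0 i + 1) -> `|dotv du f| <= 1 - dotv u f ->
  du = 0.
Proof.
move=> u_vert du_coord; rewrite ler_norml => /andP[du_f_ge du_f_le].
apply: (vertex_perturb u_vert); split=> [i|].
- by rewrite !mxE; move: (du_coord i); rewrite ler_norml => /andP[]; lra.
- by rewrite dotvDl; lra.
- by rewrite !mxE; move: (du_coord i); rewrite ler_norml => /andP[]; lra.
- by rewrite dotvBl; lra.
Qed.

Lemma vertex_polar_slack u j : vertices (polar_simplex f) u ->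
  dotv u f < 1 -> u ord0 j = -1.
Proof.
move=> u_vert uf_lt1; have [[u_ge _] _] := u_vert.
apply/eqP; rewrite eq_le u_ge andbT leNgt; apply/negP => uj_gt.
pose e := Num.min (u ord0 j + 1) ((1 - dotv u f) / f ord0 j).
have e_gt0 : 0 < e by rewrite lt_min divr_gt0 ?subr_gt0 //; lra.
have e_le_coord : e <= u ord0 j + 1 by rewrite ge_min lexx.
have e_le_dot : e * f ord0 j <= 1 - dotv u f.
  by rewrite -ler_pdivlMr // ge_min lexx orbT.
have coord_ok i : `|(e *: evec R j) ord0 i| <= u ord0 i + 1.
  rewrite !mxE normrM gtr0_norm //.
  have [<-|_] := eqVneq j i; first by rewrite normr1 mulr1.
  by rewrite normr0 mulr0; have := u_ge i; lra.
have dot_ok : `|dotv (e *: evec R j) f| <= 1 - dotv u f.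
  by rewrite dotvZl dotv_evecl normrM !gtr0_norm.
have /rowP/(_ j) := vertex_polar_simplex_perturb u_vert coord_ok dot_ok.
by rewrite !mxE eqxx mulr1 => e0; move: e_gt0; rewrite e0 ltxx.
Qed.

Lemma vertex_polar_pair u j k : vertices (polar_simplex f) u -> j != k ->
  u ord0 j = -1 \/ u ord0 k = -1.
Proof.
move=> u_vert jk; have [[u_ge uf_le1] _] := u_vert.
have [|uj] := eqVneq (u ord0 j) (-1); first by left.
have [|uk] := eqVneq (u ord0 k) (-1); first by right.
have uj_gt : -1 < u ord0 j by rewrite lt_neqAle eq_sym uj u_ge.
have uk_gt : -1 < u ord0 k by rewrite lt_neqAle eq_sym uk u_ge.
have [fj_gt0 fk_gt0] := (f_gt0 j, f_gt0 k).
pose e := Num.min ((u ord0 j + 1) / f ord0 k) ((u ord0 k + 1) / f ord0 j).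
have e_gt0 : 0 < e by rewrite lt_min !divr_gt0 //; lra.
have e_le_j : e * f ord0 k <= u ord0 j + 1 by rewrite -ler_pdivlMr // ge_min lexx.
have e_le_k : e * f ord0 j <= u ord0 k + 1.
  by rewrite -ler_pdivlMr // ge_min lexx orbT.
(* Moving along f_k e_j - f_j e_k leaves the pairing with f unchanged. *)
pose du := e *: (f ord0 k *: evec R j - f ord0 j *: evec R k).
have coord_ok i : `|du ord0 i| <= u ord0 i + 1.
  rewrite !mxE; have [<-|ji] := eqVneq j i.
    by rewrite eq_sym (negbTE jk) /= mulr1 mulr0 subr0 gtr0_norm ?mulr_gt0.
  have [<-|ki] := eqVneq k i.
    by rewrite /= mulr1 mulr0 sub0r mulrN normrN gtr0_norm ?mulr_gt0.
  by rewrite /= !mulr0 subr0 mulr0 normr0; have := u_ge i; lra.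
have dot_ok : `|dotv du f| <= 1 - dotv u f.
  rewrite dotvZl dotvBl !dotvZl !dotv_evecl [f ord0 k * _]mulrC subrr.
  by rewrite mulr0 normr0 subr_ge0.
have /rowP/(_ j) := vertex_polar_simplex_perturb u_vert coord_ok dot_ok.
rewrite !mxE eqxx eq_sym (negbTE jk) /= mulr1 mulr0 subr0 => /eqP.
by rewrite mulf_eq0 !gt_eqF.
Qed.

Lemma vertices_polar_simplex u : vertices (polar_simplex f) u <->
  u = polar_vertex0 \/ exists j, u = polar_vertex j.
Proof.
split=> [u_vert|[->|[j ->]]]; last 2 first.
- exact: vertices_polar_vertex0.
- exact: vertices_polar_vertex.
have [[u_ge uf_le1] _] := u_vert.
have [uf1|uf_neq1] := eqVneq (dotv u f) 1; last first.
  left; apply: eq_polar_vertex0 => i; apply: vertex_polar_slack u_vert _.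
  by rewrite lt_neqAle uf_neq1.
have [[j uj]|all_m1] := pselect (exists j, u ord0 j != -1); last first.
  left; apply: eq_polar_vertex0 => i; apply/eqP/negP => ui.
  by apply: all_m1; exists i; apply/negP.
right; exists j; apply: eq_polar_vertex uf1 => i ij.
by have [|/eqP] := vertex_polar_pair u_vert ij; last rewrite (negbTE uj).
Qed.


Lemma reflexive_simplexP : reflexive_polytope (latticeN' f) (simplexP f) <->
  fsum \is a Num.int /\ forall j, (1 + fsum) / f ord0 j \is a Num.int.
Proof.
have dual0 : dual_lattice (latticeN' f) polar_vertex0 <-> fsum \is a Num.int.
  apply: iff_trans (dual_latticeN'E _ _) _; rewrite dotv_polar_vertex0 rpredN.
  by split=> [[]|fsum_int] //; split=> // i; rewrite mxE rpredN1.
have dualj j : dual_lattice (latticeN' f) (polar_vertex j) <->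
    (1 + fsum) / f ord0 j \is a Num.int.
  apply: iff_trans (dual_latticeN'E _ _) _; rewrite dotv_polar_vertex.
  split=> [[coord _]|ratio_int].
    by move: (coord j); rewrite polar_vertex_diag rpredDl ?rpredN1.
  split=> [i|]; last exact: rpred1.
  have [->|ij] := eqVneq i j; last by rewrite polar_vertex_off ?rpredN1.
  by rewrite polar_vertex_diag rpredD ?rpredN1.
rewrite /reflexive_polytope polar_simplexE.
split=> [[_ _ vert_dual]|[fsum_int ratio_int]].
  split; first exact/dual0/vert_dual/vertices_polar_vertex0.
  by move=> j; apply/dualj/vert_dual/vertices_polar_vertex.
split; [exact: simplexP_lattice_polytope | exact: interior_simplexP |].
by move=> u /vertices_polar_simplex[->|[j ->]]; [apply/dual0 | apply/dualj].
Qed.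

End PositiveSimplex.

Lemma int_num_divE (R : archiNumFieldType) (m n : int) : m != 0 ->
  (n%:~R / m%:~R \is a @Num.int R) = (m %| n)%Z.
Proof.
move=> m_neq0; apply/idP/idP => [/intrP[q nq]|/dvdzP[q ->]].
  by apply/dvdzP; exists q; apply: (@intr_inj R); rewrite intrM -nq divfK ?intr_eq0.
by rewrite intrM mulfK ?intr_eq0 ?intr_int.
Qed.

Theorem proposition4p1 (R : realType) (d : nat) (a : 'I_d -> nat) (b : nat)
  (ha : forall i, (0 < a i)%N) (hb : (0 < b)%N) :
  reflexive_polytope (latticeN' (fvec R a b)) (simplexP (fvec R a b)) <->
  exists c : int, (\sum_(i < d) a i)%:Z = b%:Z * c /\
    forall i, ((a i)%:Z %| b%:Z * (c + 1))%Z.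
Proof.
have f_gt0 i : 0 < fvec R a b ord0 i by rewrite mxE divr_gt0 ?ltr0n.
have b_neq0 : b%:Z != 0 by rewrite eqz_nat -lt0n.
have a_neq0 i : (a i)%:Z != 0 by rewrite eqz_nat -lt0n.
have fsumE : \sum_i fvec R a b ord0 i = (\sum_i a i)%:Z%:~R / b%:Z%:~R.
  by rewrite -!pmulrn natr_sum mulr_suml; apply: eq_bigr => i _; rewrite mxE.
have ratioE j : (1 + (\sum_i a i)%:Z%:~R / b%:Z%:~R) / fvec R a b ord0 j =
    (b%:Z + (\sum_i a i)%:Z)%:~R / (a j)%:Z%:~R.
  by rewrite mxE intrD -!pmulrn; field; rewrite !pnatr_eq0 -!lt0n ha hb.
apply: iff_trans (reflexive_simplexP f_gt0) _.
rewrite fsumE int_num_divE //.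
split=> [[/dvdzP[c sum_a] ratio_int]|[c [sum_a a_dvd]]].
  exists c; split=> [|i]; first by rewrite sum_a mulrC.
  move: (ratio_int i); rewrite ratioE int_num_divE // sum_a.
  by rewrite mulrDr mulr1 addrC mulrC.
split=> [|j]; first by apply/dvdzP; exists c; rewrite sum_a mulrC.
by rewrite ratioE int_num_divE // sum_a -[X in X + _]mulr1 -mulrDr addrC a_dvd.
Qed.
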